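(* For a thermodynamic Stephani universe with $\dot R\neq0$, $b'(R)\neq0$ and $a(R)\neq0$, one has $$\pi=\frac p\rho=\frac{a(R)\,(1+b w)}{1+(b-Rb')w}-1,$$ and the indicatrix $\chi=u(p)/u(\rho)$ is $$\chi=\pi+\frac13+\frac13(\pi+1)\big[(\pi+1)A_1(R)+A_2(R)\big],\qquad A_1=-\frac{Rb''}{a^2b'},\quad A_2=\frac{Rb''}{ab'}-\frac{a'R}{a^2}-\frac1a .$$ Consequently (since $\rho$ is a function of $R$), $c_s^2=\chi(\rho,p)=\pi+\frac13+\frac13(\pi+1)[(\pi+1)A_1(\rho)+A_2(\rho)]$ for two real functions $A_1(\rho),A_2(\rho)$.
   Context: Thermodynamic Stephani universe: $ds^2=-\alpha^2dt^2+\Omega^2(dx^2+dy^2+dz^2)$ with $L=R(t)/(1+b(t)w)$, $\Omega=\frac{w}{2z}L$, $\alpha=R\,\partial_R\ln L$, $w=2z/(1+\frac\varepsilon4 r^2)$, $r^2=x^2+y^2+z^2$, $\varepsilon\in\{0,\pm1\}$, $R(t),b(t)$ arbitrary; functions of $t$ are regarded as functions of $R$ and a prime denotes $d/dR$; thus $\alpha=\frac{1+(b-Rb')w}{1+bw}$. Fluid velocity $u=\alpha^{-1}\partial_t$, $\rho=\frac{3}{R^2}(\dot R^2+\varepsilon-4b^2)$, $p=-\rho-\frac R3\frac{\rho'(R)}{\alpha}$, and $a(R)\equiv-\frac{R\rho'(R)}{3\rho}$. *)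

From Stdlib Require Import Reals.
From Coquelicot Require Import Coquelicot.
Open Scope R_scope.

Definition rsq (x y z : R) : R := x ^ 2 + y ^ 2 + z ^ 2.

Definition wcoord (eps x y z : R) : R := 2 * z / (1 + eps / 4 * rsq x y z).

(* Lapse  alpha = (1 + (b - R b') w) / (1 + b w), with b regarded as a function of R;
   Rf : t |-> R(t),  bR : R |-> b(R). *)
Definition alphaF (eps : R) (Rf bR : R -> R) (t x y z : R) : R :=
  let r := Rf t in
  let w := wcoord eps x y z in
  (1 + (bR r - r * Derive bR r) * w) / (1 + bR r * w).

Definition rhoF (eps : R) (Rf bR : R -> R) (t : R) : R :=
  3 / (Rf t) ^ 2 * ((Derive Rf t) ^ 2 + eps - 4 * (bR (Rf t)) ^ 2).

(* Pressure  p = - rho - (R/3) rho'(R) / alpha,  rhoR : R |-> rho(R). *)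
Definition pF (eps : R) (Rf bR rhoR : R -> R) (t x y z : R) : R :=
  - rhoF eps Rf bR t
  - Rf t / 3 * Derive rhoR (Rf t) / alphaF eps Rf bR t x y z.

(* Action of the fluid velocity u = alpha^{-1} d/dt on a spacetime function f(t,x,y,z). *)
Definition uact (eps : R) (Rf bR : R -> R) (f : R -> R -> R -> R -> R)
  (t x y z : R) : R :=
  / alphaF eps Rf bR t x y z * Derive (fun s => f s x y z) t.

Definition indicatrix (eps : R) (Rf bR rhoR : R -> R) (t x y z : R) : R :=
  uact eps Rf bR (pF eps Rf bR rhoR) t x y z
  / uact eps Rf bR (fun s _ _ _ => rhoF eps Rf bR s) t x y z.

Definition aR (rhoR : R -> R) (r : R) : R := - r * Derive rhoR r / (3 * rhoR r).

Definition A1R (bR rhoR : R -> R) (r : R) : R :=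
  - r * Derive (Derive bR) r / ((aR rhoR r) ^ 2 * Derive bR r).

Definition A2R (bR rhoR : R -> R) (r : R) : R :=
  r * Derive (Derive bR) r / (aR rhoR r * Derive bR r)
  - Derive (aR rhoR) r * r / (aR rhoR r) ^ 2
  - 1 / aR rhoR r.

(* Standing (nondegeneracy / regularity) assumptions at the event (t,x,y,z),
   together with the hypotheses Rdot <> 0, b'(R) <> 0, a(R) <> 0 of the statement. *)
Definition good_point (eps : R) (Rf bR rhoR : R -> R) (t x y z : R) : Prop :=
  let r := Rf t in
  let w := wcoord eps x y z in
  r <> 0 /\
  1 + eps / 4 * rsq x y z <> 0 /\
  1 + bR r * w <> 0 /\
  alphaF eps Rf bR t x y z <> 0 /\
  ex_derive Rf t /\
  locally r (fun s => ex_derive bR s) /\ ex_derive (Derive bR) r /\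
  locally r (fun s => ex_derive rhoR s) /\ ex_derive (Derive rhoR) r /\
  Derive Rf t <> 0 /\
  Derive bR r <> 0 /\
  aR rhoR r <> 0.

(* Along the flow lines [w] is constant, so [rho] and [p] are functions of [R]
   alone and [u(p)/u(rho) = p'(R)/rho'(R)] by the chain rule.  Since
   [p = -rho - R rho'/(3 alpha) = rho (a/alpha - 1)], the pressure ratio is
   [pi = a/alpha - 1], and differentiating gives
   [chi = pi - R a'/(3 a alpha) + R alpha'/(3 alpha^2)].  The lapse satisfies
   the Riccati-type identity [R alpha' = (alpha - 1)(alpha + R b''/b')], which
   turns this into the stated quadratic expression in [pi + 1 = a/alpha].
   Finally, if [rho] is injective in [R], composing [A1], [A2] with a left
   inverse of [rho] makes them functions of [rho]. *)

From Stdlib Require Import Reals ClassicalEpsilon.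
From Coquelicot Require Import Coquelicot.
Open Scope R_scope.

(* [auto_derive] leaves eta-expanded atoms such as [fun x => bR x], which [field]
   does not identify with [bR]. *)
Ltac eta_contract :=
  repeat match goal with |- context [fun x : R => ?f x] => change (fun x : R => f x) with f end.

Definition lapse (bR : R -> R) (w r : R) : R :=
  (1 + (bR r - r * Derive bR r) * w) / (1 + bR r * w).

Definition pressureR (bR rhoR : R -> R) (w r : R) : R :=
  - rhoR r - r / 3 * Derive rhoR r / lapse bR w r.

Lemma pF_pressureR (eps : R) (Rf bR rhoR : R -> R) (t x y z : R) :
  (forall s, rhoF eps Rf bR s = rhoR (Rf s)) ->
  pF eps Rf bR rhoR t x y z = pressureR bR rhoR (wcoord eps x y z) (Rf t).
Proof. intros Hrho. unfold pF, pressureR. now rewrite Hrho. Qed.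

Lemma injective_left_inverse (f : R -> R) :
  (forall r1 r2, f r1 = f r2 -> r1 = r2) -> exists g : R -> R, forall r, g (f r) = r.
Proof.
intros Hinj.
exists (fun v => epsilon (inhabits 0) (fun r => f r = v)).
intros r. apply Hinj.
apply (epsilon_spec (inhabits 0) (fun s => f s = f r)). now exists r.
Qed.

Section RadialFunctions.

Variables (bR rhoR : R -> R) (w r : R).

Hypotheses (Hr : r <> 0) (Hbw : 1 + bR r * w <> 0) (HL : lapse bR w r <> 0)
  (Hb : ex_derive bR r) (Hb' : ex_derive (Derive bR) r) (Hb1 : Derive bR r <> 0)
  (Hrho : ex_derive rhoR r) (Hrho' : ex_derive (Derive rhoR) r)
  (Ha : aR rhoR r <> 0).

Let L := lapse bR w r.
Let a := aR rhoR r.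

Lemma rhoR_neq0 : rhoR r <> 0.
Proof.
intros E; apply Ha; unfold a, aR; rewrite E.
unfold Rdiv; rewrite Rmult_0_r, Rinv_0; ring.
Qed.

Lemma Derive_rhoR_neq0 : Derive rhoR r <> 0.
Proof. intros E; apply Ha; unfold aR; rewrite E; unfold Rdiv; ring. Qed.

Lemma lapse_num_neq0 : 1 + (bR r - r * Derive bR r) * w <> 0.
Proof. intros E; apply HL; unfold lapse; rewrite E; unfold Rdiv; ring. Qed.

Lemma is_derive_lapse :
  is_derive (lapse bR w) r ((L - 1) * (L + r * Derive (Derive bR) r / Derive bR r) / r).
Proof.
unfold L, lapse. auto_derive.
- repeat split; auto.
- eta_contract. field. repeat split; auto.
Qed.

Lemma pressure_ratio : pressureR bR rhoR w r / rhoR r = a / L - 1.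
Proof.
pose proof rhoR_neq0. unfold pressureR, a, aR, L. field. auto.
Qed.

Lemma is_derive_pressureR :
  is_derive (pressureR bR rhoR w) r
    (- Derive rhoR r - (Derive rhoR r + r * Derive (Derive rhoR) r) / (3 * L)
     + r * Derive rhoR r * Derive (lapse bR w) r / (3 * L ^ 2)).
Proof.
assert (HLd : ex_derive (lapse bR w) r) by (eexists; apply is_derive_lapse).
unfold pressureR, L. auto_derive.
- repeat split; auto.
- eta_contract. field. auto.
Qed.

Lemma pressure_derive_ratio :
  Derive (pressureR bR rhoR w) r / Derive rhoR r =
  a / L - 1 - r * Derive (aR rhoR) r / (3 * a * L)
  + r * Derive (lapse bR w) r / (3 * L ^ 2).
Proof.
assert (Hrho0 := rhoR_neq0). assert (Hrho1 := Derive_rhoR_neq0).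
assert (Hda : is_derive (aR rhoR) r
  (- (Derive rhoR r + r * Derive (Derive rhoR) r) / (3 * rhoR r)
   + r * Derive rhoR r ^ 2 / (3 * rhoR r ^ 2))).
{ unfold aR. auto_derive.
  - repeat split; auto.
  - eta_contract. field. auto. }
rewrite (is_derive_unique _ _ _ is_derive_pressureR), (is_derive_unique _ _ _ Hda).
fold L. unfold a, aR. field. repeat split; auto.
Qed.

Lemma indicatrix_radial :
  let pi := a / L - 1 in
  Derive (pressureR bR rhoR w) r / Derive rhoR r =
  pi + 1 / 3 + 1 / 3 * (pi + 1) * ((pi + 1) * A1R bR rhoR r + A2R bR rhoR r).
Proof.
intros pi. rewrite pressure_derive_ratio, (is_derive_unique _ _ _ is_derive_lapse).
unfold pi, A1R, A2R. fold a. field. repeat split; auto.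
Qed.

End RadialFunctions.

Lemma indicatrix_chain (eps : R) (Rf bR rhoR : R -> R) (t x y z : R) :
  (forall s, rhoF eps Rf bR s = rhoR (Rf s)) ->
  ex_derive Rf t -> Derive Rf t <> 0 ->
  ex_derive (pressureR bR rhoR (wcoord eps x y z)) (Rf t) ->
  ex_derive rhoR (Rf t) -> Derive rhoR (Rf t) <> 0 ->
  alphaF eps Rf bR t x y z <> 0 ->
  indicatrix eps Rf bR rhoR t x y z =
  Derive (pressureR bR rhoR (wcoord eps x y z)) (Rf t) / Derive rhoR (Rf t).
Proof.
intros Hrho HRf HRd HP Hrh Hrh1 Ha.
unfold indicatrix, uact; cbv beta.
rewrite (Derive_ext (fun s => pF eps Rf bR rhoR s x y z)
                    (fun s => pressureR bR rhoR (wcoord eps x y z) (Rf s)))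
  by (intros; apply pF_pressureR, Hrho).
rewrite (Derive_ext (fun s => rhoF eps Rf bR s) (fun s => rhoR (Rf s)))
  by apply Hrho.
rewrite Derive_comp, (Derive_comp rhoR Rf) by assumption.
field. auto.
Qed.

Lemma pressure_ratio_and_indicatrix (eps : R) (Rf bR rhoR : R -> R) (t x y z : R) :
  (forall s, rhoF eps Rf bR s = rhoR (Rf s)) ->
  good_point eps Rf bR rhoR t x y z ->
  let r := Rf t in
  let w := wcoord eps x y z in
  let pi := pF eps Rf bR rhoR t x y z / rhoF eps Rf bR t in
  pi = aR rhoR r * (1 + bR r * w) / (1 + (bR r - r * Derive bR r) * w) - 1 /\
  indicatrix eps Rf bR rhoR t x y z =
    pi + 1 / 3 + 1 / 3 * (pi + 1) * ((pi + 1) * A1R bR rhoR r + A2R bR rhoR r).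
Proof.
intros Hrho G r w pi.
destruct G as (Hr & _ & Hbw & Ha & HRf & HbL & Hb' & HrhoL & Hrho' & HRd & Hb1 & HaR).
assert (Hb := locally_singleton _ _ HbL). assert (Hrho1 := locally_singleton _ _ HrhoL).
assert (HL : lapse bR w r <> 0) by exact Ha.
assert (Hpi : pi = aR rhoR r / lapse bR w r - 1).
{ unfold pi. rewrite pF_pressureR, Hrho by exact Hrho. now apply pressure_ratio. }
split.
- rewrite Hpi. pose proof (lapse_num_neq0 bR w r HL). unfold lapse. field. auto.
- rewrite (indicatrix_chain eps Rf bR rhoR t x y z Hrho HRf HRd
    (ex_intro _ _ (is_derive_pressureR bR rhoR w r Hr Hbw HL Hb Hb' Hb1 Hrho1 Hrho'))
    Hrho1 (Derive_rhoR_neq0 rhoR r HaR) Ha).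
  rewrite Hpi. now apply indicatrix_radial.
Qed.

Theorem mainTheorem10
  (eps : R) (Rf bR rhoR : R -> R)
  (Heps : eps = 0 \/ eps = 1 \/ eps = -1)
  (Hrho : forall t, rhoF eps Rf bR t = rhoR (Rf t)) :
  (forall t x y z, good_point eps Rf bR rhoR t x y z ->
     let r := Rf t in
     let w := wcoord eps x y z in
     let pi := pF eps Rf bR rhoR t x y z / rhoF eps Rf bR t in
     pi = aR rhoR r * (1 + bR r * w) / (1 + (bR r - r * Derive bR r) * w) - 1 /\
     indicatrix eps Rf bR rhoR t x y z =
       pi + 1 / 3 + 1 / 3 * (pi + 1) * ((pi + 1) * A1R bR rhoR r + A2R bR rhoR r))
  /\
  ((forall r1 r2, rhoR r1 = rhoR r2 -> r1 = r2) ->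
   exists A1 A2 : R -> R,
     forall t x y z, good_point eps Rf bR rhoR t x y z ->
       let rho := rhoF eps Rf bR t in
       let pi := pF eps Rf bR rhoR t x y z / rho in
       indicatrix eps Rf bR rhoR t x y z =
         pi + 1 / 3 + 1 / 3 * (pi + 1) * ((pi + 1) * A1 rho + A2 rho)).
Proof.
split; [intros t x y z; now apply pressure_ratio_and_indicatrix |].
intros Hinj.
destruct (injective_left_inverse rhoR Hinj) as [inv Hinv].
exists (fun v => A1R bR rhoR (inv v)), (fun v => A2R bR rhoR (inv v)).
intros t x y z G rho pi.
unfold rho; rewrite Hrho, Hinv.
destruct (pressure_ratio_and_indicatrix eps Rf bR rhoR t x y z Hrho G) as [_ Hchi].
unfold pi, rho. rewrite Hrho. rewrite Hrho in Hchi. exact Hchi.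
Qed.
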